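(* Let $u,v\in E^0$. Then $(F_u,\phi_u)\cong(F_v,\phi_v)$ as extended representation graphs if and only if $u=v$.
   Context: $E=(E^0,E^1,s,r)$ is a row-finite directed graph; a vertex is regular if it emits an edge; for each regular $v$ a fixed edge $e^v\in s^{-1}(v)$ is called special, others nonspecial. The double graph $E_d$ has vertices $E^0$ and edges $e$ (real) and $e^*$ (ghost) for $e\in E^1$, with $s_d(e)=s(e),r_d(e)=r(e),s_d(e^* )=r(e),r_d(e^* )=s(e)$. Paths of length $0$ are vertices. For a path $p=e_1\dots e_n$ set $p^*=e_n^*\dots e_1^*$. The set $X$ of basis paths consists of the paths in $E_d$: vertices; $p,p^*$ for paths $p$ of length $\ge1$ in $E$; $pq^*$ with $p=e_1\dots e_k,q=f_1\dots f_n$ of length $\ge1$ in $E$, $r(p)=r(q)$, and $e_k\ne f_n$ or $e_k=f_n$ nonspecial. $X_v=\{x\in X: s_d(x)=v\}$. An extended representation graph for $E$ is a pair $(F,\phi)$, $F$ a directed graph, $\phi:F\to E_d$ a graph homomorphism, such that for every $w\in F^0$: (i) $w$ is a source or receives exactly one edge $f_w$; (ii) if $w$ is a source or $\phi(f_w)$ is a nonspecial real edge, $\phi$ maps $s^{-1}(w)$ bijectively onto $s_d^{-1}(\phi(w))$; (iii) if $\phi(f_w)$ is a special real edge, onto $s_d^{-1}(\phi(w))\setminus\{\phi(f_w)^*\}$; (iv) if $\phi(f_w)$ is a ghost edge, onto the ghost edges in $s_d^{-1}(\phi(w))$. An isomorphism $(F,\phi)\to(G,\psi)$ is a graph isomorphism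 $\alpha$ with $\psi\circ\alpha=\phi$. $(F_v,\phi_v)$ for $v\in E^0$: vertices $w_x$ ($x\in X_v$), edges $f_x$ ($x\in X_v\setminus\{v\}$) from $w_{x'}$ to $w_x$ where $x'$ is $x$ with its last edge removed ($x'=v$ if $|x|=1$); $\phi_v(w_x)=r_d(x)$, $\phi_v(f_x)=$ last edge of $x$. It is an extended representation graph. *)

From Stdlib Require Import List.
Import ListNotations.
Set Implicit Arguments.

(** A directed graph E = (E^0, E^1, s, r). *)
Record Graph := mkGraph {
  V : Type;
  Ed : Type;
  src : Ed -> V;
  rng : Ed -> V
}.
Arguments src {_} _.
Arguments rng {_} _.

Definition row_finite (E : Graph) : Prop :=
  forall v : V E, exists l : list (Ed E), forall e : Ed E, src e = v <-> In e l.

Definition regular {E : Graph} (v : V E) : Prop := exists e : Ed E, src e = v.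

(** A choice of special edges: for each regular vertex v a fixed edge e^v
    with s(e^v) = v (sp v = Some e^v); sp v = None for sinks. *)
Record SpecialChoice (E : Graph) := mkSpecial {
  sp : V E -> option (Ed E);
  sp_src : forall v e, sp v = Some e -> src e = v;
  sp_reg : forall v : V E, regular v -> exists e, sp v = Some e
}.

Definition special (E : Graph) (S : SpecialChoice E) (e : Ed E) : Prop :=
  sp S (src e) = Some e.

(** Edges of the double graph E_d : real edges e and ghost edges e^*. *)
Inductive dedge (E : Graph) : Type :=
| Real : Ed E -> dedge E
| Ghost : Ed E -> dedge E.
Arguments Real {E} _.
Arguments Ghost {E} _.

Definition sd (E : Graph) (d : dedge E) : V E :=
  match d with Real e => src e | Ghost e => rng e end.
Definition rd (E : Graph) (d : dedge E) : V E :=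
  match d with Real e => rng e | Ghost e => src e end.

Fixpoint dpath (E : Graph) (v : V E) (l : list (dedge E)) : Prop :=
  match l with
  | [] => True
  | d :: l' => sd d = v /\ dpath (rd d) l'
  end.

Definition dend (E : Graph) (v : V E) (l : list (dedge E)) : V E :=
  fold_left (fun _ d => rd d) l v.

(** [basis S v l]: the path (v, l) in E_d is a basis path in X_v, i.e. it
    starts at v and is either the vertex v, a real path p, a ghost path q^*,
    or p q^* where p = e_1...e_k and q = f_1...f_n with (e_k <> f_n or e_k
    nonspecial).  Here the ghost part is listed in path order, so
    q^* = f_n^* ... f_1^* is [Ghost f_n; ...; Ghost f_1].  The condition
    r(p) = r(q) is implied by [dpath]. *)
Definition basis (E : Graph) (S : SpecialChoice E) (v : V E)
  (l : list (dedge E)) : Prop :=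
  dpath v l /\
  exists (p qs : list (Ed E)),
    l = map (@Real E) p ++ map (@Ghost E) qs /\
    (forall p0 ek fn qs0, p = p0 ++ [ek] -> qs = fn :: qs0 ->
        ek <> fn \/ ~ special S ek).

Definition Xv (E : Graph) (S : SpecialChoice E) (v : V E) : Type :=
  { l : list (dedge E) | basis S v l }.

(** Edges of F_v: the edge f_x for x in X_v \ {v}, encoded as (x', x, d)
    with x = x' d, where d is the last edge of x. *)
Definition FvEdge (E : Graph) (S : SpecialChoice E) (v : V E) : Type :=
  { xx : Xv S v * Xv S v & { d : dedge E | proj1_sig (snd xx) = proj1_sig (fst xx) ++ [d] } }.

Definition Fv (E : Graph) (S : SpecialChoice E) (v : V E) : Graph :=
  @mkGraph (Xv S v) (FvEdge S v)
    (fun f => fst (projT1 f)) (fun f => snd (projT1 f)).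

Definition phiV (E : Graph) (S : SpecialChoice E) (v : V E) (x : V (Fv S v)) : V E :=
  dend v (proj1_sig x).

Definition phiE (E : Graph) (S : SpecialChoice E) (v : V E) (f : Ed (Fv S v)) : dedge E :=
  proj1_sig (projT2 f).

Definition bijective {A B : Type} (f : A -> B) : Prop :=
  exists g : B -> A, (forall x, g (f x) = x) /\ (forall y, f (g y) = y).

Definition rep_iso (E : Graph) (F G : Graph)
  (phiVF : V F -> V E) (phiEF : Ed F -> dedge E)
  (psiVG : V G -> V E) (psiEG : Ed G -> dedge E) : Prop :=
  exists (aV : V F -> V G) (aE : Ed F -> Ed G),
    bijective aV /\ bijective aE /\
    (forall f, src (aE f) = aV (src f)) /\
    (forall f, rng (aE f) = aV (rng f)) /\
    (forall w, psiVG (aV w) = phiVF w) /\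
    (forall f, psiEG (aE f) = phiEF f).

Arguments phiV {E} S v _.
Arguments phiE {E} S v _.
Arguments rep_iso {E F G} _ _ _ _.

(* The vertex w_v of F_v is its only source: every other w_x receives the edge
   f_x from w_x', because the prefix x' of a basis path is again a basis path.
   A graph isomorphism maps sources to sources, so an isomorphism
   (F_u, phi_u) -> (F_v, phi_v) sends w_u to w_v, and then
   u = phi_u(w_u) = phi_v(w_v) = v. *)
From Stdlib Require Import List.
Import ListNotations.

Definition source {G : Graph} (w : V G) : Prop := forall f : Ed G, rng f <> w.

Section IsoSource.

Context {F G : Graph}.
Variables (aV : V F -> V G) (aE : Ed F -> Ed G).
Hypotheses (aV_bij : bijective aV) (aE_bij : bijective aE).
Hypothesis aE_rng : forall f, rng (aE f) = aV (rng f).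

Lemma iso_source (w : V F) : source w -> source (aV w).
Proof.
  intros Hw g Hg.
  destruct aV_bij as [gV [gV_aV _]]; destruct aE_bij as [gE [_ aE_gE]].
  apply (Hw (gE g)).
  now rewrite <- (gV_aV (rng (gE g))), <- aE_rng, aE_gE, Hg, gV_aV.
Qed.

End IsoSource.

Lemma dpath_app_l (E : Graph) (v : V E) (l l' : list (dedge E)) :
  dpath v (l ++ l') -> dpath v l.
Proof.
  revert v; induction l as [|d l IH]; simpl; intros v H; auto.
  destruct H as [H1 H2]; split; auto.
Qed.

Section BasisPaths.

Context {E : Graph}.
Variables (S : SpecialChoice E) (v : V E).

Lemma basis_nil : basis S v [].
Proof.
  split; [exact I|]. exists [], []; split; [reflexivity|].
  intros p0 ek fn qs0 H; destruct p0; discriminate.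
Qed.

Lemma basis_removelast (l : list (dedge E)) (d : dedge E) :
  basis S v (l ++ [d]) -> basis S v l.
Proof.
  intros [Hp [p [qs [Heq Hc]]]]; split; [eapply dpath_app_l; eauto|].
  destruct qs as [|q qs'] using rev_ind.
  - rewrite app_nil_r in Heq.
    destruct p as [|e p'] using rev_ind; [destruct l; discriminate|].
    rewrite map_app in Heq; apply app_inj_tail in Heq as [Hl _].
    exists p', []; split; [now rewrite app_nil_r|].
    intros p0 ek fn qs0 _ H; discriminate.
  - rewrite map_app, app_assoc in Heq; apply app_inj_tail in Heq as [Hl _].
    exists p, qs'; split; [exact Hl|].
    intros p0 ek fn qs0 Hp0 Hqs. apply (Hc p0 ek fn (qs0 ++ [q])); auto.
    now rewrite Hqs.
Qed.

Definition Fv_root : V (Fv S v) := exist _ [] basis_nil.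

Lemma phiV_Fv_root : phiV S v Fv_root = v.
Proof. reflexivity. Qed.

Lemma Fv_root_source : source Fv_root.
Proof.
  intros [[x [y Hy]] [d Hd]] H; simpl in *.
  injection H as Hnil. rewrite Hnil in Hd. now destruct x as [x Hx], x.
Qed.

Lemma Fv_source_nil (x : V (Fv S v)) : source x -> proj1_sig x = [].
Proof.
  destruct x as [l Hl]; simpl; intros Hsrc.
  destruct l as [|d l _] using rev_ind; [reflexivity|exfalso].
  set (x' := exist (fun l => basis S v l) l (basis_removelast l d Hl) : V (Fv S v)).
  set (x := exist (fun l => basis S v l) (l ++ [d]) Hl : V (Fv S v)).
  exact (Hsrc (existT _ (x', x) (exist _ d eq_refl)) eq_refl).
Qed.

Lemma phiV_Fv_source (x : V (Fv S v)) : source x -> phiV S v x = v.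
Proof. intros Hx; unfold phiV; now rewrite (Fv_source_nil x Hx). Qed.

End BasisPaths.

Lemma rep_iso_refl (E : Graph) (S : SpecialChoice E) (v : V E) :
  rep_iso (phiV S v) (phiE S v) (phiV S v) (phiE S v).
Proof.
  exists (fun x => x), (fun f => f).
  repeat split; exists (fun x => x); split; reflexivity.
Qed.

Theorem proposition5p4 (E : Graph) (hE : row_finite E) (S : SpecialChoice E)
  (u v : V E) :
  rep_iso (phiV S u) (phiE S u) (phiV S v) (phiE S v) <-> u = v.
Proof.
  split; [|intros <-; apply rep_iso_refl].
  intros [aV [aE [aV_bij [aE_bij [_ [aE_rng [phiV_aV _]]]]]]].
  pose proof (iso_source aV aE aV_bij aE_bij aE_rng _ (Fv_root_source S u)) as Hsrc.
  rewrite <- (phiV_Fv_root S u), <- phiV_aV.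
  exact (phiV_Fv_source S v _ Hsrc).
Qed.
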